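(* For any parent selection mechanism (applied to the set of points of maximum $\mathrm{L}$-value), the expected time for the modified GSEMO on \textsc{LOTZ} to reach the Pareto front (i.e. to have a Pareto-optimal point in its population) is $O(n^2)$.
   Context: Search space $\{0,1\}^n$; objectives maximised. $\textsc{LOTZ}(x)=(\mathrm{LO}(x),\mathrm{TZ}(x))$, $\mathrm{LO}$ = number of leading ones, $\mathrm{TZ}$ = number of trailing zeros. Dominance: $y$ dominates $x$ if $f_i(y)\ge f_i(x)$ for all $i$, strictly for some $i$; weakly dominates if $\ge$ in all. Pareto set $\{1^i0^{n-i}:0\le i\le n\}$. Modified GSEMO: let $\mathrm{L}(x)=\mathrm{LO}(x)+\mathrm{TZ}(x)$. Start with uniform random $s$, $P=\{s\}$. Each iteration: let $P'\subseteq P$ be the points with maximum $\mathrm{L}$-value; choose a parent $s\in P'$ by the parent selection mechanism (with any diversity scores computed w.r.t. $P'$); create $s'$ by flipping each bit independently with probability $1/n$; if $s'$ is not dominated by any member of $P$, add it and remove all members of $P$ weakly dominated by $s'$. Time = number of iterations. *)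

From HB Require Import structures.
From mathcomp Require Import all_boot all_order all_algebra.
From mathcomp Require Import all_classical all_reals all_analysis.
Set Implicit Arguments. Unset Strict Implicit. Unset Printing Implicit Defensive.
Import Order.TTheory GRing.Theory Num.Theory.
Local Open Scope ring_scope.

(* Bit strings of length n: x i is the bit at position i+1. *)
Definition bits (n : nat) := {ffun 'I_n -> bool}.

Section GSEMO.
Variable n : nat.
Local Notation B := (bits n).

Definition LO (x : B) : nat :=
  #|[set i : 'I_n | [forall j : 'I_n, (j <= i)%N ==> x j]]|.
Definition TZ (x : B) : nat :=
  #|[set i : 'I_n | [forall j : 'I_n, (i <= j)%N ==> ~~ x j]]|.

(* LOTZ(x) = (LO x, TZ x), both maximised *)
Definition weakly_dominates (y x : B) : bool :=
  (LO x <= LO y)%N && (TZ x <= TZ y)%N.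
Definition dominates (y x : B) : bool :=
  weakly_dominates y x && ((LO x < LO y)%N || (TZ x < TZ y)%N).

Definition pareto_optimal (x : B) : bool := [forall y : B, ~~ dominates y x].

Definition Lval (x : B) : nat := (LO x + TZ x)%N.

Definition maxL_set (P : {set B}) : {set B} :=
  [set x in P | Lval x == \max_(z in P) Lval z].

Definition update (P : {set B}) (y : B) : {set B} :=
  if [exists z in P, dominates z y] then P
  else y |: [set z in P | ~~ weakly_dominates y z].

Definition hamming (x y : B) : nat := #|[set i : 'I_n | x i != y i]|.

Variable R : realType.

(* standard bit mutation: flip each bit independently with prob. 1/n *)
Definition mut_prob (x y : B) : R :=
  (n%:R^-1) ^+ hamming x y * (1 - n%:R^-1) ^+ (n - hamming x y).

Definition selection_mechanism (sel : nat -> {set B} -> B -> R) : Prop :=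
  forall t (P : {set B}), P != finset.set0 ->
    [/\ forall x, 0 <= sel t P x,
        forall x, x \notin maxL_set P -> sel t P x = 0
      & \sum_(x in maxL_set P) sel t P x = 1].

Definition trans (sel : nat -> {set B} -> B -> R) (t : nat)
    (P Q : {set B}) : R :=
  \sum_(s in maxL_set P) sel t P s *
    \sum_(y : B) mut_prob s y * (update P y == Q)%:R.

Definition has_pareto (P : {set B}) : bool := [exists x in P, pareto_optimal x].

(* survival sub-distribution: q t P = Pr[population after t iterations is P
   and no population at iterations 0..t contained a Pareto-optimal point] *)
Fixpoint surv (sel : nat -> {set B} -> B -> R) (t : nat) (Q : {set B}) : R :=
  match t with
  | 0 => (~~ has_pareto Q)%:R *
         \sum_(s : B) (2 ^ n)%:R^-1 * (Q == [set s])%:R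
  | t'.+1 => (~~ has_pareto Q)%:R *
         \sum_(P : {set B}) surv sel t' P * trans sel t' P Q
  end.

(* Pr[T > t], T = first iteration at which the population has a
   Pareto-optimal point *)
Definition tail_prob (sel : nat -> {set B} -> B -> R) (t : nat) : R :=
  \sum_(Q : {set B}) surv sel t Q.

(* E[T] = sum_{t >= 0} Pr[T > t]  (in the extended reals; +oo if infinite) *)
Definition expected_time (sel : nat -> {set B} -> B -> R) : \bar R :=
  (\sum_(0 <= t <oo) (tail_prob sel t)%:E)%E.

End GSEMO.

(* Additive drift on the potential  e n (n - max_{z in P} L(z)).  While the
   population P has no Pareto-optimal point, every parent s of maximal L-value
   has L(s) < n.  Setting the first 0-bit of s that lies outside its block of
   trailing zeros increases LO(s) without decreasing TZ(s); the offspring has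
   larger L-value than every member of P, so it is accepted and raises the
   maximal L-value of the population, which no iteration lowers.  This one-bit
   mutation has probability (1/n)(1 - 1/n)^(n-1) >= 1/(e n), so the potential
   drops by at least 1 in expectation at every iteration, and the expected
   time is at most the initial potential, e n^2. *)

From HB Require Import structures.
From mathcomp Require Import all_boot all_order all_algebra.
From mathcomp Require Import all_classical all_reals all_analysis.
From mathcomp Require Import zify ring lra.
Import Order.TTheory GRing.Theory Num.Theory.
Local Open Scope ring_scope.
Set Implicit Arguments. Unset Strict Implicit. Unset Printing Implicit Defensive.

Section LOTZ.
Variable n : nat.
Implicit Types (x y z s : bits n) (P : {set bits n}) (i j k : 'I_n).

Definition lead_set x : {set 'I_n} :=
  [set i : 'I_n | [forall j : 'I_n, (j <= i)%N ==> x j]].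
Definition trail_set x : {set 'I_n} :=
  [set i : 'I_n | [forall j : 'I_n, (i <= j)%N ==> ~~ x j]].

Lemma lead_setP x i :
  reflect (forall j : 'I_n, (j <= i)%N -> x j) (i \in lead_set x).
Proof.
by rewrite inE; apply: (iffP forallP) => h j; [apply/implyP | apply/implyP/h].
Qed.

Lemma trail_setP x i :
  reflect (forall j : 'I_n, (i <= j)%N -> ~~ x j) (i \in trail_set x).
Proof.
by rewrite inE; apply: (iffP forallP) => h j; [apply/implyP | apply/implyP/h].
Qed.

Lemma trail_set_closed x i j :
  i \in trail_set x -> (i <= j)%N -> j \in trail_set x.
Proof.
move=> /trail_setP hi ij; apply/trail_setP => l jl; apply: hi.
exact: leq_trans jl.
Qed.

Lemma lead_trail_disjoint x : [disjoint lead_set x & trail_set x].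
Proof.
apply/pred0P => i /=; apply/negP => /andP[/lead_setP hl /trail_setP ht].
by move: (ht i (leqnn i)); rewrite hl.
Qed.

Lemma Lval_card x : Lval x = (#|lead_set x| + #|trail_set x|)%N.
Proof. by []. Qed.

Lemma LvalE x : Lval x = #|lead_set x :|: trail_set x|.
Proof.
by apply/esym/eqP; rewrite Lval_card (leq_card_setU _ _).2 lead_trail_disjoint.
Qed.

Lemma Lval_le x : (Lval x <= n)%N.
Proof. by rewrite LvalE -[leqRHS]card_ord max_card. Qed.

Lemma pareto_optimal_of_Lval x : (n <= Lval x)%N -> pareto_optimal x.
Proof.
move=> hx; apply/forallP => y; apply/negP.
rewrite /dominates /weakly_dominates => /andP[/andP[h1 h2] h3].
have := Lval_le y; move: hx h3; rewrite /Lval => hx /orP[] h3; lia.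
Qed.

Definition set_bit x (k : 'I_n) : bits n := [ffun i => (i == k) || x i].

Lemma hamming_set_bit x k : ~~ x k -> hamming x (set_bit x k) = 1%N.
Proof.
move=> xk; rewrite /hamming -(cards1 k); congr #|pred_of_set _|.
apply/setP => i; rewrite !inE ffunE.
by have [->|] := eqVneq i k; [rewrite (negbTE xk) | rewrite eqxx].
Qed.

Lemma lead_set_set_bit x k : (forall j : 'I_n, (j < k)%N -> x j) ->
  k |: lead_set x \subset lead_set (set_bit x k).
Proof.
move=> below; apply/fintype.subsetP => i.
rewrite in_setU1 => /predU1P[-> | /lead_setP hi].
  apply/lead_setP => j jk; rewrite ffunE.
  by case: ltngtP jk => // [/below -> _|/val_inj -> _]; rewrite ?eqxx ?orbT.
by apply/lead_setP => j ji; rewrite ffunE hi ?orbT.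
Qed.

Lemma trail_set_set_bit x k : k \notin trail_set x ->
  trail_set x \subset trail_set (set_bit x k).
Proof.
move=> kT; apply/fintype.subsetP => i /[dup] iT /trail_setP hi.
apply/trail_setP => j ij; rewrite ffunE negb_or hi // andbT.
by apply/eqP => jk; move: kT; rewrite -jk (trail_set_closed iT ij).
Qed.

Lemma first_improvable_bit x : (Lval x < n)%N ->
  exists k : 'I_n, [/\ ~~ x k, forall j : 'I_n, (j < k)%N -> x j
                     & k \notin trail_set x].
Proof.
rewrite LvalE => small.
have /card_gt0P[k0] : (0 < #|~: (lead_set x :|: trail_set x)|)%N.
  by have := cardsC (lead_set x :|: trail_set x); rewrite card_ord; lia.
rewrite finset.in_setC finset.in_setU negb_or => /andP[/lead_setP k0L k0T].
have /existsP[j0 /andP[j0k0 xj0]] : [exists j : 'I_n, (j <= k0)%N && ~~ x j].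
  apply: contra_notT k0L; rewrite negb_exists => /forallP hj j jk0.
  by move: (hj j); rewrite jk0 negbK.
case: (arg_minnP (P := fun j => ~~ x j) val xj0) => k xk kmin.
exists k; split=> // [j jk|].
  by apply: contraTT jk => /kmin; rewrite -leqNgt.
apply: contra k0T => kT; apply: trail_set_closed kT _.
exact: leq_trans (kmin _ xj0) j0k0.
Qed.

Lemma improving_flip x : (Lval x < n)%N ->
  exists y, hamming x y = 1%N /\ (Lval x < Lval y)%N.
Proof.
move=> /first_improvable_bit[k [xk below kT]].
exists (set_bit x k); split; first exact: hamming_set_bit.
have kL : k \notin lead_set x by apply: contraNN xk => /lead_setP; apply.
have := subset_leq_card (lead_set_set_bit below).
have := subset_leq_card (trail_set_set_bit kT).
by rewrite !Lval_card cardsU1 kL add1n -addSn => *; apply: leq_add.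
Qed.

Definition maxLval P : nat := \max_(z in P) Lval z.

Lemma leq_maxLval P z : z \in P -> (Lval z <= maxLval P)%N.
Proof. by move=> zP; apply: (leq_bigmax_cond (F := fun z => Lval z)). Qed.

Lemma maxLval_le P : (maxLval P <= n)%N.
Proof. by apply/bigmax_leqP => z _; exact: Lval_le. Qed.

Lemma mem_maxL_set P s : s \in maxL_set P -> s \in P /\ Lval s = maxLval P.
Proof. by rewrite inE => /andP[sP /eqP ->]. Qed.

Lemma maxLval_update P y : (maxLval P <= maxLval (update P y))%N.
Proof.
rewrite /update; case: ifP => // _; apply/bigmax_leqP => z zP.
have [yz|] := boolP (weakly_dominates y z).
  apply: leq_trans (leq_maxLval (setU11 _ _)).
  by move: yz; rewrite /weakly_dominates /Lval => /andP[]; lia.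
by move=> yNz; apply: leq_maxLval; rewrite in_setU1 inE zP yNz orbT.
Qed.

Lemma Lval_le_maxLval_update P y :
  (forall z, z \in P -> (Lval z < Lval y)%N) ->
  (Lval y <= maxLval (update P y))%N.
Proof.
move=> y_best; rewrite /update; case: ifP => [/existsP[z /andP[zP zy]]|_].
  move: (y_best z zP) zy; rewrite /dominates /weakly_dominates /Lval.
  by move=> ? /andP[/andP[? ?] _]; lia.
exact: leq_maxLval (setU11 _ _).
Qed.

End LOTZ.

Lemma expRN1_le_pow (R : realType) (m : nat) :
  expR (-1) <= (1 - (m.+1)%:R^-1) ^+ m :> R.
Proof.
case: m => [|m]; first by rewrite expr0 expR_le1 lerN10.
set a : R := m.+1%:R.
have a0 : 0 < a by rewrite ltr0n.
have step : expR (- a^-1) <= 1 - (m.+2)%:R^-1.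
  have -> : 1 - (m.+2)%:R^-1 = (1 + a^-1)^-1 :> R.
    rewrite -natr1 -/a; field.
    by apply/andP; split; rewrite lt0r_neq0 // ?addr_gt0.
  by rewrite expRN lef_pV2 ?posrE ?expR_gt0 ?addr_gt0 ?invr_gt0 ?expR_ge1Dx.
have -> : expR (-1) = expR (- a^-1) ^+ m.+1.
  by rewrite -expRM_natl -/a mulrN mulfV // gt_eqF.
apply: lerXn2r => //; rewrite nnegrE ?expR_ge0 //.
exact: le_trans (expR_ge0 _) step.
Qed.

Section Mutation.
Variables (R : realType) (n : nat).
Implicit Types (s y : bits n).

Lemma mut_prob_prod s y :
  mut_prob R s y = \prod_(i < n) (if s i != y i then n%:R^-1 else 1 - n%:R^-1).
Proof.
rewrite /mut_prob /hamming; set S := [set i : 'I_n | s i != y i].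
rewrite (bigID (mem S)) /=.
rewrite [X in _ = X * _](eq_bigr (fun=> n%:R^-1)) => [|i]; last first.
  by rewrite inE => ->.
rewrite [X in _ = _ * X](eq_bigr (fun=> 1 - n%:R^-1)) => [|i]; last first.
  by rewrite inE; case: (s i != y i).
rewrite !prodr_const; congr (_ * _ ^+ _).
by have hC := cardC S; rewrite card_ord in hC; rewrite -[X in (X - _)%N]hC addKn.
Qed.

Lemma sum_mut_prob s : \sum_y mut_prob R s y = 1.
Proof.
under eq_bigr do rewrite mut_prob_prod.
rewrite -(bigA_distr_bigA (fun i b => if s i != b then n%:R^-1 else 1 - n%:R^-1)).
apply: big1 => i _; rewrite big_bool.
by case: (s i) => /=; rewrite ?subrK ?addrNK // addrC subrK.
Qed.

Lemma mut_prob_ge0 s y : 0 <= mut_prob R s y.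
Proof.
rewrite /mut_prob; apply/mulr_ge0/exprn_ge0; first by rewrite exprn_ge0 ?invr_ge0.
by rewrite subr_ge0; case: n => [|m]; rewrite ?invr0 ?ler01 // invf_le1 ?ler1n.
Qed.

Lemma mut_prob_hamming1 s y : hamming s y = 1%N ->
  n%:R^-1 * expR (-1) <= mut_prob R s y.
Proof.
case: n s y => [|m] s y h1.
  have := max_card [set i : 'I_0 | s i != y i].
  by rewrite card_ord -/(hamming s y) h1.
rewrite /mut_prob h1 expr1 subn1; apply: ler_wpM2l; first by rewrite invr_ge0.
exact: expRN1_le_pow.
Qed.

End Mutation.

Lemma nneseries_le_bound (R : realType) (u : nat -> R) (K : R) :
  (forall t, 0 <= u t) -> (forall N, \sum_(0 <= t < N) u t <= K) ->
  (\sum_(0 <= t <oo) (u t)%:E <= K%:E)%E.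
Proof.
move=> u_ge0 u_le; apply: lime_le.
  by apply: is_cvg_nneseries => t _ _; rewrite lee_fin.
by apply: nearW => N; rewrite sumEFin lee_fin.
Qed.

Section AdditiveDrift.
Variables (R : realType) (n : nat) (sel : nat -> {set bits n} -> bits n -> R).
Hypothesis sel_ok : selection_mechanism sel.
Implicit Types (P Q : {set bits n}).

Lemma sum_trans_mul t P (F : {set bits n} -> R) :
  \sum_Q trans sel t P Q * F Q =
  \sum_(s in maxL_set P) sel t P s * \sum_y mut_prob R s y * F (update P y).
Proof.
rewrite /trans; under eq_bigr do rewrite mulr_suml.
rewrite exchange_big /=; apply: eq_bigr => s _.
under eq_bigr do rewrite -mulrA mulr_suml.
rewrite -mulr_sumr exchange_big /=; congr (_ * _); apply: eq_bigr => y _.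
rewrite (bigD1 (update P y)) //= eqxx mulr1 big1 ?addr0 // => Q /negbTE QNu.
by rewrite eq_sym QNu mulr0 mul0r.
Qed.

Lemma trans_ge0 t P Q : 0 <= trans sel t P Q.
Proof.
apply: sumr_ge0 => s sP'.
have PN0 : P != finset.set0.
  by apply: contraTneq sP' => ->; rewrite !inE.
have [sel_ge0 _ _] := sel_ok t PN0.
by rewrite mulr_ge0 // sumr_ge0 // => y _; rewrite mulr_ge0 ?mut_prob_ge0 ?ler0n.
Qed.

Lemma surv_ge0 t Q : 0 <= surv sel t Q.
Proof.
elim: t Q => [|t IH] Q /=; rewrite mulr_ge0 ?ler0n //; apply: sumr_ge0 => X _.
  by rewrite mulr_ge0 ?invr_ge0 ?ler0n.
by rewrite mulr_ge0 ?trans_ge0.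
Qed.

Lemma tail_prob0_le1 : tail_prob sel 0 <= 1.
Proof.
pose init Q := \sum_(s : bits n) (2 ^ n)%:R^-1 * (Q == [set s])%:R :> R.
have init_ge0 Q : 0 <= init Q.
  by apply: sumr_ge0 => s _; rewrite mulr_ge0 ?invr_ge0 ?ler0n.
apply: (@le_trans _ _ (\sum_Q init Q)).
  by apply: ler_sum => Q _; apply: ler_piMl; rewrite ?init_ge0 ?lern1 ?leq_b1.
rewrite /init exchange_big /= (eq_bigr (fun=> (2 ^ n)%:R^-1)) => [|s _].
  rewrite sumr_const card_ffun card_bool card_ord -[_^-1 *+ _]mulr_natl.
  by rewrite mulfV ?pnatr_eq0 ?expn_eq0.
rewrite (bigD1 [set s]) //= eqxx mulr1 big1 ?addr0 // => Q /negbTE ->.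
exact: mulr0.
Qed.

Variable V : {set bits n} -> R.
Hypothesis V_ge0 : forall P, 0 <= V P.
Hypothesis V_drift : forall t P,
  ~~ has_pareto P -> \sum_Q trans sel t P Q * V Q <= V P - 1.

Let expected_pot t := \sum_Q surv sel t Q * V Q.

Lemma expected_pot_step t : expected_pot t.+1 <= expected_pot t - tail_prob sel t.
Proof.
apply: (@le_trans _ _ (\sum_Q (\sum_P surv sel t P * trans sel t P Q) * V Q)).
  apply: ler_sum => Q _; rewrite [surv _ _.+1 _]/= -mulrA ler_piMl //.
    rewrite mulr_ge0 ?sumr_ge0 // => P _.
    by rewrite mulr_ge0 ?surv_ge0 ?trans_ge0.
  by case: (~~ _).
under eq_bigr do rewrite mulr_suml.
rewrite exchange_big /= /tail_prob -sumrB; apply: ler_sum => P _.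
under eq_bigr do rewrite -mulrA.
rewrite -mulr_sumr -[X in _ - X]mulr1 -mulrBr.
have [hp|nhp] := boolP (has_pareto P).
  by rewrite /surv; case: t => [|t] /=; rewrite hp !mul0r.
by rewrite ler_wpM2l ?surv_ge0 ?V_drift.
Qed.

Lemma sum_tail_prob_le N :
  \sum_(0 <= t < N) tail_prob sel t + expected_pot N <= expected_pot 0.
Proof.
elim: N => [|N IH]; first by rewrite big_nil add0r.
by rewrite big_nat_recr //=; have := expected_pot_step N; lra.
Qed.

Lemma expected_pot0_le K : (forall P, V P <= K) -> expected_pot 0 <= K.
Proof.
move=> V_le; have K_ge0 : 0 <= K := le_trans (V_ge0 finset.set0) (V_le _).
apply: (@le_trans _ _ (tail_prob sel 0 * K)).
  by rewrite /tail_prob mulr_suml ler_sum // => Q _; rewrite ler_wpM2l ?surv_ge0.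
by rewrite ler_piMl ?tail_prob0_le1.
Qed.

Theorem expected_time_le_drift K :
  (forall P, V P <= K) -> (expected_time sel <= K%:E)%E.
Proof.
move=> V_le; apply: nneseries_le_bound => [t|N].
  by rewrite /tail_prob sumr_ge0 // => Q _; rewrite surv_ge0.
apply: le_trans (expected_pot0_le V_le); apply: le_trans (sum_tail_prob_le N).
by rewrite lerDl sumr_ge0 // => Q _; rewrite mulr_ge0 ?surv_ge0.
Qed.

End AdditiveDrift.

Section Potential.
Variables (R : realType) (n : nat).
Implicit Types (y s : bits n) (P Q : {set bits n}).

Definition pot P : R := n%:R * expR 1 * (n - maxLval P)%:R.

Lemma pot_ge0 P : 0 <= pot P.
Proof. by rewrite /pot !mulr_ge0 ?ler0n ?expR_ge0. Qed.

Lemma pot_le P : pot P <= n%:R * expR 1 * n%:R.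
Proof.
by rewrite /pot ler_wpM2l ?mulr_ge0 ?ler0n ?expR_ge0 // ler_nat leq_subr.
Qed.

Lemma pot_mutation_drift P s : ~~ has_pareto P -> s \in maxL_set P ->
  \sum_y mut_prob R s y * pot (update P y) <= pot P - 1.
Proof.
move=> nhp /mem_maxL_set[sP Ls].
have Ls_lt : (Lval s < n)%N.
  rewrite ltnNge; apply: contra nhp => /pareto_optimal_of_Lval po.
  by apply/existsP; exists s; rewrite sP.
have [ys [ham1 Lys]] := improving_flip Ls_lt.
set c : R := n%:R * expR 1.
have c_ge0 : 0 <= c by rewrite mulr_ge0 ?ler0n ?expR_ge0.
have pot_update y : pot (update P y) <= pot P - c * (y == ys)%:R.
  have : (n - maxLval (update P y) + (y == ys) <= n - maxLval P)%N.
    have := maxLval_le (update P y); case: eqP => [->|_] /=.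
      have ys_best z : z \in P -> (Lval z < Lval ys)%N.
        by move=> zP; rewrite (leq_ltn_trans (leq_maxLval zP)) // -Ls.
      by have := Lval_le_maxLval_update ys_best; lia.
    by have := maxLval_update P y; lia.
  rewrite -(ler_nat R) natrD => h.
  by rewrite /pot -/c -mulrBr ler_wpM2l // lerBrDr.
apply: le_trans (ler_sum _ (fun y _ =>
  ler_wpM2l (mut_prob_ge0 R s y) (pot_update y))) _.
under eq_bigr do rewrite mulrBr.
rewrite sumrB -mulr_suml sum_mut_prob mul1r (bigD1 ys) //= eqxx mulr1.
rewrite big1 => [|y /negbTE ->]; last by rewrite !mulr0.
rewrite addr0 lerD2l lerN2.
have n_gt0 : (0 < n)%N by apply: leq_ltn_trans Ls_lt.
apply: le_trans (ler_wpM2r c_ge0 (mut_prob_hamming1 R ham1)).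
have nN0 : n%:R != 0 :> R by rewrite pnatr_eq0 -lt0n.
by rewrite /c expRN mulrACA !mulVf ?mulr1 // gt_eqF ?expR_gt0.
Qed.

Lemma pot_drift (sel : nat -> {set bits n} -> bits n -> R) t P :
  (0 < n)%N -> selection_mechanism sel -> ~~ has_pareto P ->
  \sum_Q trans sel t P Q * pot Q <= pot P - 1.
Proof.
move=> n_gt0 sel_ok nhp; rewrite sum_trans_mul.
have [P0|PN0] := eqVneq P finset.set0.
  rewrite big_pred0 => [|s]; last first.
    by apply/negP => /mem_maxL_set[]; rewrite P0 inE.
  rewrite subr_ge0 /pot /maxLval P0 big_set0 subn0.
  by rewrite !mulr_ege1 ?ler1n // (le_trans _ (expR_ge1Dx 1)) // lerDl.
have [sel_ge0 _ sel_sum1] := sel_ok t P PN0.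
apply: le_trans (ler_sum _ (fun s sM =>
  ler_wpM2l (sel_ge0 s) (pot_mutation_drift nhp sM))) _.
by rewrite -mulr_suml sel_sum1 mul1r.
Qed.

End Potential.

Theorem lemma7 (R : realType) :
  exists (C : R) (n0 : nat), forall (n : nat) (sel : nat -> {set bits n} -> bits n -> R),
    (n0 <= n)%N -> selection_mechanism sel ->
    (expected_time sel <= (C * (n ^ 2)%:R)%:E)%E.
Proof.
exists (expR 1), 1%N => n sel n_gt0 sel_ok.
have -> : expR 1 * (n ^ 2)%:R = n%:R * expR 1 * n%:R :> R.
  by rewrite natrX expr2 mulrCA mulrA.
apply: (expected_time_le_drift sel_ok (@pot_ge0 R n)) (@pot_le R n) => t P.
exact: pot_drift.
Qed.
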